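(* Consider the system \[ \begin{aligned} \dot X_1^1&=\bigl(\mu_1(S_1^{in}-k_1X_1^1)-D_1\bigr)X_1^1,\\ \dot X_2^1&=\bigl(\mu_2(S_2^{in}+k_2X_1^1-k_3X_2^1)-D_1\bigr)X_2^1,\\ \dot X_1^2&=D_2(X_1^1-X_1^2)+\mu_1(S_1^{in}-k_1X_1^2)X_1^2,\\ \dot X_2^2&=D_2(X_2^1-X_2^2)+\mu_2(S_2^{in}+k_2X_1^2-k_3X_2^2)X_2^2, \end{aligned} \] on $M=\{(X_1^1,X_2^1,X_1^2,X_2^2)\in\mathbb R_+^4: X_1^i\le S_1^{in}/k_1,\ X_2^i\le (S_2^{in}+k_2X_1^i)/k_3,\ i=1,2\}$, where $\mu_1,\mu_2$ satisfy (H1) and (H2). Then its nonnegative steady states are of the following nine types, with the indicated components (for $i=1,2$), and a steady state of each type exists (with nonnegative components) if and only if the indicated condition holds: \begin{itemize} \item $\mathcal E_{00}^{00}=(0,0,0,0)$: always exists. \item $\mathcal E_{00}^{0i}=\bigl(0,0,0,(S_2^{in}-\lambda_2^{2i})/k_3\bigr)$: exists iff $S_2^{in}>\lambda_2^{2i}$. \item $\mathcal E_{00}^{10}=\bigl(0,0,(S_1^{in}-\lambda_1^2)/k_1,0\bigr)$: exists iff $S_1^{in}>\lambda_1^2$. \item $\mathcal E_{00}^{1i}=\bigl(0,0,(S_1^{in}-\lambda_1^2)/k_1,\ k_2(S_1^{in}-F_{2i})/(k_1k_3)\bigr)$: exists iff $S_1^{in}>\max(\lambda_1^2,F_{2i})$.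 \item $\mathcal E_{10}^{10}=\bigl((S_1^{in}-\lambda_1^1)/k_1,0,X_1^{2*},0\bigr)$, where $X_1^{2*}$ is the unique solution of $f_1(x)=g_1(x)$ (with $X_1^{1*}=(S_1^{in}-\lambda_1^1)/k_1$): exists iff $S_1^{in}>\lambda_1^1$. \item $\mathcal E_{10}^{1i}=\bigl((S_1^{in}-\lambda_1^1)/k_1,0,X_1^{2*},\phi_i/k_3\bigr)$, with $X_1^{2*}$ as in the previous item: exists iff $S_1^{in}>\lambda_1^1$ and $\phi_i>0$. \item $\mathcal E_{0i}^{01}=\bigl(0,(S_2^{in}-\lambda_2^{1i})/k_3,0,X_2^{2*}\bigr)$, where $X_2^{2*}$ is a solution of $f_2(x)=g_2(x)$ with $X_2^{1*}=(S_2^{in}-\lambda_2^{1i})/k_3$: exists iff $S_2^{in}>\lambda_2^{1i}$. \item $\mathcal E_{0i}^{11}=\bigl(0,(S_2^{in}-\lambda_2^{1i})/k_3,(S_1^{in}-\lambda_1^2)/k_1,X_2^{2*}\bigr)$, where $X_2^{2*}$ is a solution of $f_3(x)=g_2(x)$ with $X_2^{1*}=(S_2^{in}-\lambda_2^{1i})/k_3$ and $X_1^{2*}=(S_1^{in}-\lambda_1^2)/k_1$: exists iff $S_1^{in}>\lambda_1^2$ and $S_2^{in}>\lambda_2^{1i}$. \item $\mathcal E_{1i}^{11}=\bigl((S_1^{in}-\lambda_1^1)/k_1,\ k_2(S_1^{in}-F_{1i})/(k_1k_3),\ X_1^{2*},X_2^{2*}\bigr)$, where $X_1^{2*}$ is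 the unique solution of $f_1(x)=g_1(x)$ (with $X_1^{1*}=(S_1^{in}-\lambda_1^1)/k_1$) and $X_2^{2*}$ is a solution of $f_3(x)=g_2(x)$ (with $X_2^{1*}=k_2(S_1^{in}-F_{1i})/(k_1k_3)$): exists iff $S_1^{in}>\max(\lambda_1^1,F_{1i})$. \end{itemize}
   Context: Parameters: $k_1,k_2,k_3>0$ (pseudo-stoichiometric coefficients), $D>0$, $r\in(0,1)$, $r_1=r$, $r_2=1-r$, $D_1=D/r_1$, $D_2=D/r_2$, $S_1^{in},S_2^{in}\ge0$. The functions $\mu_1,\mu_2\in C^1(\mathbb R_+)$ satisfy (H1): $\mu_1(0)=0$, $\lim_{s\to\infty}\mu_1(s)=m_1$, $\mu_1'(s)>0$ for all $s>0$; and (H2): $\mu_2(0)=0$, $\lim_{s\to\infty}\mu_2(s)=0$, and there is $S_2^m>0$ with $\mu_2'>0$ on $(0,S_2^m)$ and $\mu_2'<0$ on $(S_2^m,\infty)$. Let $D_i^m=r_i\mu_2(S_2^m)$. For $i=1,2$: $\lambda_1^i=\lambda_1^i(D,r)$ is the unique solution of $\mu_1(S)=D_i$ when $D<r_im_1$, and $\lambda_1^i=+\infty$ otherwise; $\lambda_2^{i1}\le\lambda_2^{i2}$ are the solutions of $\mu_2(S)=D_i$ when $D\le D_i^m$, and $\lambda_2^{ij}=+\infty$ otherwise. $F_{ij}=\lambda_1^i+\frac{k_1}{k_2}(\lambda_2^{ij}-S_2^{in})$. $\phi_j=S_2^{in}+k_2X_1^{2*}-\lambda_2^{2j}$, where $X_1^{2*}$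 is the unique solution of $f_1(x)=g_1(x)$ with $X_1^{1*}=(S_1^{in}-\lambda_1^1)/k_1$ (defined for $0<D\le D_2^m$, $S_1^{in}>\lambda_1^1$). Auxiliary functions (where $X_1^{1*},X_2^{1*},X_1^{2*}$ denote the indicated components of the steady state under consideration): $g_1(x)=D_2(x-X_1^{1*})/x$, $g_2(x)=D_2(x-X_2^{1*})/x$ on $(0,\infty)$; $f_1(x)=\mu_1(S_1^{in}-k_1x)$ on $[0,S_1^{in}/k_1]$; $f_2(x)=\mu_2(S_2^{in}-k_3x)$ on $[0,S_2^{in}/k_3]$; $f_3(x)=\mu_2(S_2^{in}+k_2X_1^{2*}-k_3x)$ on $[0,(S_2^{in}+k_2X_1^{2*})/k_3]$. Notation $\mathcal E_{ab}^{cd}$: the subscript refers to $(X_1^1,X_2^1)$ and the superscript to $(X_1^2,X_2^2)$; $0$ means the component vanishes, a nonzero index means it is positive (the index $i\in\{1,2\}$ distinguishing the two possible branches). *)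

(* R : realType, extended reals \bar R for the
   possibly infinite break-even concentrations lambda. *)
From HB Require Import structures.
From mathcomp Require Import all_boot all_order all_algebra.
From mathcomp Require Import all_classical all_reals all_analysis.
Set Implicit Arguments. Unset Strict Implicit. Unset Printing Implicit Defensive.
Import Order.TTheory GRing.Theory Num.Theory.
Import numFieldNormedType.Exports.
Local Open Scope classical_set_scope.
Local Open Scope ring_scope.

Record model (R : realType) := Model {
  k1 : R; k2 : R; k3 : R;      (* pseudo-stoichiometric coefficients *)
  D : R; r : R;                (* dilution rate and volume fraction *)
  S1in : R; S2in : R;
  mu1 : R -> R; mu2 : R -> R;
  m1 : R;
  S2m : R
}.

Inductive br := b1 | b2.

Section Defs.
Variables (R : realType) (p : model R).

Definition C1_Rplus_with_deriv (f f' : R -> R) : Prop :=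
  (forall s : R, 0 <= s ->
     (fun h : R => h^-1 * (f (s + h) - f s))
       @ within [set h : R | h != 0 /\ 0 <= s + h] (nbhs (0:R)) --> f' s)
  /\ {within `[0, +oo[, continuous f'}.

Definition H1 (dmu1 : R -> R) : Prop :=
  C1_Rplus_with_deriv (mu1 p) dmu1 /\
  mu1 p 0 = 0 /\ mu1 p x @[x --> +oo] --> m1 p /\
  (forall s, 0 < s -> 0 < dmu1 s).

Definition H2 (dmu2 : R -> R) : Prop :=
  C1_Rplus_with_deriv (mu2 p) dmu2 /\
  mu2 p 0 = 0 /\ mu2 p x @[x --> +oo] --> 0 /\
  0 < S2m p /\
  (forall s, 0 < s < S2m p -> 0 < dmu2 s) /\
  (forall s, S2m p < s -> dmu2 s < 0).

Definition rr (i : br) : R := if i is b1 then r p else 1 - r p.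
Definition Dd (i : br) : R := D p / rr i.
Definition Dm (i : br) : R := rr i * mu2 p (S2m p).

Definition lambda1 (i : br) : \bar R :=
  if D p < rr i * m1 p
  then (xget 0 [set S | 0 <= S /\ mu1 p S = Dd i])%:E
  else +oo%E.

Definition lambda2 (i j : br) : \bar R :=
  if D p <= Dm i then
    (if j is b1 then
       xget 0 [set S | 0 <= S /\ mu2 p S = Dd i /\
                       forall T, 0 <= T -> mu2 p T = Dd i -> S <= T]
     else
       xget 0 [set S | 0 <= S /\ mu2 p S = Dd i /\
                       forall T, 0 <= T -> mu2 p T = Dd i -> T <= S])%:E
  else +oo%E.

Definition F (i j : br) : \bar R :=
  (lambda1 i + (k1 p / k2 p)%:E * (lambda2 i j - (S2in p)%:E))%E.

(* X_1^{1*} = (S1in - lambda_1^1)/k1 (meaningful when S1in > lambda_1^1) *)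
Definition X11star : R := (S1in p - fine (lambda1 b1)) / k1 p.

(* X_1^{2*}: the unique solution of f1(x) = g1(x),
   x in the common domain ]0, S1in/k1] *)
Definition X12star : R :=
  xget 0 [set x | 0 < x <= S1in p / k1 p /\
                  mu1 p (S1in p - k1 p * x) = Dd b2 * (x - X11star) / x].

Definition phi (j : br) : \bar R :=
  ((S2in p + k2 p * X12star)%:E - lambda2 b2 j)%E.

(* The invariant set M; a state is (X_1^1, X_2^1, X_1^2, X_2^2). *)
Definition inM (x1 x2 x3 x4 : R) : Prop :=
  0 <= x1 <= S1in p / k1 p /\ 0 <= x3 <= S1in p / k1 p /\
  0 <= x2 <= (S2in p + k2 p * x1) / k3 p /\
  0 <= x4 <= (S2in p + k2 p * x3) / k3 p.

Definition steady (x1 x2 x3 x4 : R) : Prop :=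
  inM x1 x2 x3 x4 /\
  (mu1 p (S1in p - k1 p * x1) - Dd b1) * x1 = 0 /\
  (mu2 p (S2in p + k2 p * x1 - k3 p * x2) - Dd b1) * x2 = 0 /\
  Dd b2 * (x1 - x3) + mu1 p (S1in p - k1 p * x3) * x3 = 0 /\
  Dd b2 * (x2 - x4) + mu2 p (S2in p + k2 p * x3 - k3 p * x4) * x4 = 0.

(* The nine types E_{ab}^{cd} (subscript: (X_1^1,X_2^1),
   superscript: (X_1^2,X_2^2)). *)
Inductive sstype :=
| E00_00 | E00_0 of br | E00_10 | E00_1 of br
| E10_10 | E10_1 of br | E0_01 of br | E0_11 of br | E1_11 of br.

Definition is_type (t : sstype) (x1 x2 x3 x4 : R) : Prop :=
  match t with
  | E00_00 => x1 = 0 /\ x2 = 0 /\ x3 = 0 /\ x4 = 0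
  | E00_0 i => x1 = 0 /\ x2 = 0 /\ x3 = 0 /\ 0 < x4 /\
      x4%:E = (((S2in p)%:E - lambda2 b2 i) * (k3 p)^-1%:E)%E
  | E00_10 => x1 = 0 /\ x2 = 0 /\ 0 < x3 /\ x4 = 0 /\
      x3%:E = (((S1in p)%:E - lambda1 b2) * (k1 p)^-1%:E)%E
  | E00_1 i => x1 = 0 /\ x2 = 0 /\ 0 < x3 /\ 0 < x4 /\
      x3%:E = (((S1in p)%:E - lambda1 b2) * (k1 p)^-1%:E)%E /\
      x4%:E = ((k2 p / (k1 p * k3 p))%:E * ((S1in p)%:E - F b2 i))%E
  | E10_10 => 0 < x1 /\ x2 = 0 /\ 0 < x3 /\ x4 = 0 /\
      x1%:E = (((S1in p)%:E - lambda1 b1) * (k1 p)^-1%:E)%E /\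
      x3 = X12star
  | E10_1 i => 0 < x1 /\ x2 = 0 /\ 0 < x3 /\ 0 < x4 /\
      x1%:E = (((S1in p)%:E - lambda1 b1) * (k1 p)^-1%:E)%E /\
      x3 = X12star /\
      x4%:E = (phi i * (k3 p)^-1%:E)%E
  | E0_01 i => x1 = 0 /\ 0 < x2 /\ x3 = 0 /\ 0 < x4 /\
      x2%:E = (((S2in p)%:E - lambda2 b1 i) * (k3 p)^-1%:E)%E /\
      (* x4 solves f2(x) = g2(x) with X_2^{1*} = x2 *)
      x4 <= S2in p / k3 p /\
      mu2 p (S2in p - k3 p * x4) = Dd b2 * (x4 - x2) / x4
  | E0_11 i => x1 = 0 /\ 0 < x2 /\ 0 < x3 /\ 0 < x4 /\
      x2%:E = (((S2in p)%:E - lambda2 b1 i) * (k3 p)^-1%:E)%E /\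
      x3%:E = (((S1in p)%:E - lambda1 b2) * (k1 p)^-1%:E)%E /\
      (* x4 solves f3(x) = g2(x) with X_2^{1*} = x2, X_1^{2*} = x3 *)
      x4 <= (S2in p + k2 p * x3) / k3 p /\
      mu2 p (S2in p + k2 p * x3 - k3 p * x4) = Dd b2 * (x4 - x2) / x4
  | E1_11 i => 0 < x1 /\ 0 < x2 /\ 0 < x3 /\ 0 < x4 /\
      x1%:E = (((S1in p)%:E - lambda1 b1) * (k1 p)^-1%:E)%E /\
      x2%:E = ((k2 p / (k1 p * k3 p))%:E * ((S1in p)%:E - F b1 i))%E /\
      x3 = X12star /\
      (* x4 solves f3(x) = g2(x) with X_2^{1*} = x2, X_1^{2*} = x3 *)
      x4 <= (S2in p + k2 p * x3) / k3 p /\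
      mu2 p (S2in p + k2 p * x3 - k3 p * x4) = Dd b2 * (x4 - x2) / x4
  end.

Definition cond (t : sstype) : Prop :=
  match t with
  | E00_00 => True
  | E00_0 i => ((S2in p)%:E > lambda2 b2 i)%E
  | E00_10 => ((S1in p)%:E > lambda1 b2)%E
  | E00_1 i => ((S1in p)%:E > Order.max (lambda1 b2) (F b2 i))%E
  | E10_10 => ((S1in p)%:E > lambda1 b1)%E
  | E10_1 i => ((S1in p)%:E > lambda1 b1)%E /\ (phi i > 0)%E
  | E0_01 i => ((S2in p)%:E > lambda2 b1 i)%E
  | E0_11 i => ((S1in p)%:E > lambda1 b2)%E /\ ((S2in p)%:E > lambda2 b1 i)%E
  | E1_11 i => ((S1in p)%:E > Order.max (lambda1 b1) (F b1 i))%E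
  end.

End Defs.

(* The steady states are found vessel by vessel. The first vessel is a plain chemostat with
   dilution rate D_1: each species is washed out or its substrate sits at a root of mu_i = D_1,
   and (H1), resp. (H2), make these roots exactly lambda_1^1, resp. lambda_2^{11} <= lambda_2^{12},
   which determines X_1^1 and X_2^1. In the second vessel a species without inflow is again washed
   out or at a root of mu_i = D_2, while a species fed by the first vessel is present and solves
   f(x) = g(x) with g(x) = D_2 (x - X^{1*}) / x; a solution exists by the intermediate value
   theorem, and it is unique for species 1, whose f decreases while g increases. Conversely, each
   existence condition states exactly that the components so obtained are positive. *)

From Pilot Require Import Defs.
From HB Require Import structures.
From mathcomp Require Import all_boot all_order all_algebra.
From mathcomp Require Import all_classical all_reals all_analysis.
From mathcomp Require Import lra ring.
Import Order.TTheory GRing.Theory Num.Theory.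
Import numFieldNormedType.Exports.
Local Open Scope classical_set_scope.
Local Open Scope ring_scope.

Section Real_facts.
Context {R : realType}.

Lemma ivt_between {g : R -> R} {a b v : R} : continuous g -> a <= b ->
  g a <= v <= g b \/ g b <= v <= g a -> exists2 c, a <= c <= b & g c = v.
Proof.
move=> g_cont ab gv.
have g_cont_ab : {within `[a, b], continuous g} by apply: continuous_subspaceT.
have gv' : Num.min (g a) (g b) <= v <= Num.max (g a) (g b).
  by case: gv => /andP [h1 h2]; rewrite ge_min le_max h1 h2 ?orbT.
have [c cab gc] := IVT ab g_cont_ab gv'.
by exists c; first by move: cab; rewrite in_itv.
Qed.

Lemma le_divr_subr_ge0 {a k x : R} : 0 < k -> (x <= a / k) = (0 <= a - k * x).
Proof. by move=> k0; rewrite subr_ge0 [k * x]mulrC ler_pdivlMr. Qed.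

Lemma affine_quotK {a l k : R} : 0 < k -> a - k * ((a - l) / k) = l.
Proof. by move=> k0; rewrite [k * _]mulrC divfK ?gt_eqF //; lra. Qed.

Lemma EFin_solve_affine {a k x : R} : 0 < k ->
  x%:E = ((a%:E - (a - k * x)%:E) * k^-1%:E)%E.
Proof. by move=> k0; rewrite -EFinB -EFinM; congr EFin; field; rewrite gt_eqF. Qed.

Lemma EFin_pmulr_gt0 {x c : R} {e : \bar R} : 0 < c ->
  x%:E = (e * c%:E)%E -> (0 < x) = (0 < e)%E.
Proof. by move=> c0 E; rewrite -lte_fin E pmule_lgt0 ?lte_fin. Qed.

Lemma ge0_mul_eq0 {a x : R} : 0 <= x -> a * x = 0 -> x = 0 \/ 0 < x /\ a = 0.
Proof.
rewrite le_eqVlt => /predU1P [<-|x0 e]; first by left.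
right; split => //; move/eqP: e; rewrite mulf_eq0 => /orP [/eqP //|].
by rewrite gt_eqF.
Qed.

Lemma dilution_ltr {Dv X x y : R} : 0 < Dv -> 0 < X -> 0 < x -> x < y ->
  Dv * (x - X) / x < Dv * (y - X) / y.
Proof.
move=> Dv0 X0 x0 xy; have y0 := lt_trans x0 xy.
rewrite ltr_pdivrMr // mulrAC ltr_pdivlMr //.
have := mulr_gt0 (mulr_gt0 Dv0 X0) (_ : 0 < y - x); rewrite subr_gt0 => /(_ xy).
nra.
Qed.

(* [Dv * (y - x) + m * x = 0] is the balance of a vessel fed at rate [Dv] with
   concentration [y]. *)
Lemma inflow0_eq {Dv m x : R} : Dv * (0 - x) + m * x = 0 <-> (m - Dv) * x = 0.
Proof. by split => e; lra. Qed.

Lemma inflow_pos_eq {Dv m x y : R} : 0 < x ->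
  Dv * (y - x) + m * x = 0 <-> m = Dv * (x - y) / x.
Proof.
move=> x0; split => [e|->]; last by rewrite divfK ?gt_eqF //; lra.
by apply: (mulIf (lt0r_neq0 x0)); rewrite /= divfK ?gt_eqF //; lra.
Qed.

Lemma inflow_gt0 {Dv m x y : R} : 0 < Dv -> 0 < y -> 0 <= x ->
  Dv * (y - x) + m * x = 0 -> 0 < x.
Proof.
move=> Dv0 y0; rewrite le_eqVlt => /predU1P [<-|//].
by rewrite subr0 mulr0 addr0 => /eqP; rewrite mulf_eq0 !gt_eqF.
Qed.

Lemma f_eq_g_unique {mu : R -> R} {a b Dv X x y : R} :
  (forall s t, 0 <= s -> s < t -> mu s < mu t) ->
  0 < b -> 0 < Dv -> 0 < X -> 0 < x -> 0 < y ->
  0 <= a - b * x -> 0 <= a - b * y ->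
  mu (a - b * x) = Dv * (x - X) / x -> mu (a - b * y) = Dv * (y - X) / y -> x = y.
Proof.
move=> mu_ltr b0 Dv0 X0 x0 y0 sx sy ex ey.
have no_lt u v : 0 < u -> u < v -> 0 <= a - b * v ->
    mu (a - b * u) = Dv * (u - X) / u -> mu (a - b * v) = Dv * (v - X) / v -> False.
  move=> u0 uv sv eu ev.
  have : mu (a - b * v) < mu (a - b * u).
    by apply: mu_ltr => //; rewrite ltrD2l ltrN2 ltr_pM2l.
  by rewrite eu ev ltNge ltW // dilution_ltr.
by case: (ltgtP x y) => // xy; [case: (no_lt x y) | case: (no_lt y x)].
Qed.

Lemma dist_max0_le (t x : R) : `|Num.max t 0 - Num.max x 0| <= `|t - x|.
Proof.
have h1 : t - x <= `|t - x| by apply: ler_norm.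
have h2 : x - t <= `|t - x| by rewrite distrC; apply: ler_norm.
rewrite ler_norml; case: (lerP 0 t) => ht; case: (lerP 0 x) => hx;
  rewrite ?(max_l ht) ?(max_l hx) ?(max_r (ltW ht)) ?(max_r (ltW hx));
  apply/andP; split; lra.
Qed.

Lemma root_gt0 {f : R -> R} {s v : R} : f 0 = 0 -> 0 < v -> 0 <= s -> f s = v -> 0 < s.
Proof.
move=> f0 v0; rewrite le_eqVlt => /predU1P [<-|//].
by rewrite f0 => v_0; move: v0; rewrite -v_0 ltxx.
Qed.

End Real_facts.

Section C1_Rplus.
Context {R : realType} {f df : R -> R} (f_C1 : C1_Rplus_with_deriv f df).

Lemma C1_Rplus_lipschitz_near (s : R) : 0 <= s ->
  exists2 d, 0 < d & forall t, 0 <= t -> `|t - s| < d ->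
    `|f t - f s| <= (`|df s| + 1) * `|t - s|.
Proof.
move: f_C1 => [f_lim _] s0.
have := f_lim s s0; move/cvgrPdist_lt/(_ 1 ltr01).
rewrite near_withinE => /nbhs_ballP [d d0 near_s].
exists d => // t t0 ts.
have [->|tns] := eqVneq t s; first by rewrite !subrr normr0 mulr0.
have ts_neq0 : t - s != 0 by rewrite subr_eq0.
have := near_s (t - s); rewrite /ball /= sub0r normrN addrCA subrr addr0.
move=> /(_ ts (conj ts_neq0 t0)).
set q := (t - s)^-1 * (f t - f s) => dq.
have -> : f t - f s = q * (t - s) by rewrite /q mulrAC mulVf // mul1r.
rewrite normrM ler_wpM2r //.
have -> : q = df s - (df s - q) by rewrite opprB addrC subrK.
by apply: (le_trans (ler_normB _ _)); rewrite lerD2l ltW.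
Qed.

Lemma continuous_C1_Rplus_ext : continuous (fun x : R => f (Num.max x 0)).
Proof.
move=> x; apply/cvgrPdist_lt => e e0.
have mx0 (y : R) : 0 <= Num.max y 0 by rewrite le_max lexx orbT.
have [d d0 lip] := C1_Rplus_lipschitz_near _ (mx0 x).
set K := `|df (Num.max x 0)| + 1.
have K0 : 0 < K by rewrite /K ltr_pwDr.
apply/nbhs_ballP; exists (Num.min d (e / K)) => /=; first by rewrite lt_min d0 divr_gt0.
move=> t; rewrite /ball /= lt_min => /andP [td te].
have dmax := dist_max0_le t x.
rewrite distrC; apply: le_lt_trans (lip _ (mx0 t) _) _.
  by apply: le_lt_trans dmax _; rewrite distrC.
apply: (@le_lt_trans _ _ (K * `|x - t|)).
  by rewrite -/K ler_wpM2l ?(ltW K0) // (distrC x).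
by rewrite mulrC -ltr_pdivlMr.
Qed.

Lemma C1_Rplus_continuous_within (a b : R) : 0 <= a -> {within `[a, b], continuous f}.
Proof.
move=> a0; have ext_cont : {within `[a, b], continuous (fun x : R => f (Num.max x 0))}.
  exact/continuous_subspaceT/continuous_C1_Rplus_ext.
apply: subspace_eq_continuous ext_cont.
move=> x; rewrite inE /= in_itv /= => /andP [ax _].
by rewrite /from_subspace max_l // (le_trans a0 ax).
Qed.

Lemma C1_Rplus_is_derive (s : R) : 0 < s -> is_derive s 1 f (df s).
Proof.
move: f_C1 => [f_lim _] s0.
have quot_lim := f_lim s (ltW s0).
suff dq : (fun h : R => h^-1 *: ((f \o shift s) (h *: 1) - f s)) @ 0^' --> df s.
  by apply: DeriveDef; [exact: cvgP dq | exact: cvg_lim dq].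
have -> : (fun h : R => h^-1 *: ((f \o shift s) (h *: 1) - f s)) =
          (fun h => h^-1 * (f (s + h) - f s)).
  by apply/funext => h; rewrite /= -[h%:A]/(h * 1) mulr1 (addrC h s).
apply: cvg_trans quot_lim; apply: cvg_app => P /=; rewrite /within => PP.
have small : \forall h \near (0 : R), `|h| < s.
  by apply/nbhs_ballP; exists s => // h; rewrite /ball /= sub0r normrN.
apply: filterS2 small PP => h hs Ph h0; apply: Ph; split => //.
by move: hs; rewrite ltr_norml => /andP [h1 _]; lra.
Qed.

Lemma C1_Rplus_derive1 {s : R} : 0 < s -> derivable f s 1 /\ 'D_1 f s = df s.
Proof.
by move=> /C1_Rplus_is_derive ds; split; [exact: ex_derive | rewrite derive_val].
Qed.

Let pos_of_in_itv {a b x : R} : 0 <= a -> x \in `]a, b[ -> 0 < x.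
Proof. by move=> a0; rewrite in_itv /= => /andP [ax _]; exact: le_lt_trans ax. Qed.

Lemma C1_Rplus_ltr {a b : R} : 0 <= a -> a < b ->
  (forall x, a < x < b -> 0 < df x) -> f a < f b.
Proof.
move=> a0 ab df_gt0.
apply: (@gtr0_derive1_lt_cc _ f a b) => //.
- by move=> x /(pos_of_in_itv a0) /C1_Rplus_derive1 [].
- move=> x xab; rewrite derive1E; have [_ ->] := C1_Rplus_derive1 (pos_of_in_itv a0 xab).
  by apply: df_gt0; move: xab; rewrite in_itv.
- exact: C1_Rplus_continuous_within.
- by rewrite in_itv /= lexx ltW.
- by rewrite in_itv /= lexx ltW.
Qed.

Lemma C1_Rplus_gtr {a b : R} : 0 <= a -> a < b ->
  (forall x, a < x < b -> df x < 0) -> f b < f a.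
Proof.
move=> a0 ab df_lt0.
apply: (@ltr0_derive1_lt_cc _ f a b) => //.
- by move=> x /(pos_of_in_itv a0) /C1_Rplus_derive1 [].
- move=> x xab; rewrite derive1E; have [_ ->] := C1_Rplus_derive1 (pos_of_in_itv a0 xab).
  by apply: df_lt0; move: xab; rewrite in_itv.
- exact: C1_Rplus_continuous_within.
- by rewrite in_itv /= lexx ltW.
- by rewrite in_itv /= lexx ltW.
Qed.

Lemma C1_Rplus_ivt {a b v : R} : 0 <= a -> a <= b ->
  f a <= v <= f b \/ f b <= v <= f a -> exists2 c, a <= c <= b & f c = v.
Proof.
move=> a0 ab fv.
have max0 x : a <= x -> Num.max x 0 = x by move=> ax; rewrite max_l // (le_trans a0 ax).
have [c /andP [ac cb] fc] : exists2 c, a <= c <= b & f (Num.max c 0) = v.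
  by apply: (ivt_between continuous_C1_Rplus_ext ab); rewrite /= !max0 ?lexx.
by exists c; rewrite ?ac ?cb // -fc max0.
Qed.

(* IVT for [x * f (a - b x) - Dv (x - X)] on [[X, a / b]]: it is nonnegative at [X] and,
   as [f 0 = 0], nonpositive at [a / b]. *)
Lemma f_eq_g_exists {a b Dv X : R} : f 0 = 0 -> 0 < b -> 0 < Dv -> 0 < X ->
  0 < a - b * X -> 0 < f (a - b * X) ->
  exists c, [/\ X < c, 0 <= a - b * c & f (a - b * c) = Dv * (c - X) / c].
Proof.
move=> f0 b0 Dv0 X0 sX fX.
pose h x := x * f (Num.max (a - b * x) 0) - Dv * (x - X).
have h_cont : continuous h.
  move=> x; have lin : {for x, continuous (fun x : R => a - b * x)}.
    by apply: cvgB; [exact: cvg_cst | apply: cvgM; [exact: cvg_cst | exact: cvg_id]].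
  apply: cvgB; last first.
    by apply: cvgM; [exact: cvg_cst | apply: cvgB; [exact: cvg_id | exact: cvg_cst]].
  by apply: cvgM; [exact: cvg_id | exact: continuous_comp lin (continuous_C1_Rplus_ext _)].
have Xab : X <= a / b by rewrite le_divr_subr_ge0 // ltW.
have hX : 0 <= h X.
  by rewrite /h max_l ?(ltW sX) // subrr mulr0 subr0; exact: mulr_ge0 (ltW X0) (ltW fX).
have hab : h (a / b) <= 0.
  rewrite /h [b * _]mulrC divfK ?gt_eqF // subrr max_l // f0 mulr0 sub0r oppr_le0.
  by apply: mulr_ge0; [exact: ltW | rewrite subr_ge0].
have h_range : h (a / b) <= 0 <= h X by rewrite hab hX.
have [c /andP [Xc cab] hc] := ivt_between h_cont Xab (or_intror h_range).
have c0 : 0 < c := lt_le_trans X0 Xc.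
have sc : 0 <= a - b * c by rewrite -le_divr_subr_ge0.
rewrite /h max_l // in hc.
have Xc' : X != c.
  apply/eqP => Xc_eq; move: hc fX; rewrite -Xc_eq subrr mulr0 subr0 => /eqP.
  by rewrite mulf_eq0 gt_eqF //= => /eqP ->; rewrite ltxx.
exists c; split => //; first by rewrite lt_neqAle Xc' Xc.
by apply/(inflow_pos_eq c0); lra.
Qed.

End C1_Rplus.

Section Model.
Variables (R : realType) (p : model R) (dmu1 dmu2 : R -> R).

Local Notation k1 := (Defs.k1 p).
Local Notation k2 := (Defs.k2 p).
Local Notation k3 := (Defs.k3 p).
Local Notation S1in := (Defs.S1in p).
Local Notation S2in := (Defs.S2in p).
Local Notation mu1 := (Defs.mu1 p).
Local Notation mu2 := (Defs.mu2 p).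
Local Notation S2m := (Defs.S2m p).
Local Notation Dd := (Defs.Dd p).
Local Notation lambda1 := (Defs.lambda1 p).
Local Notation lambda2 := (Defs.lambda2 p).
Local Notation F := (Defs.F p).
Local Notation X11star := (Defs.X11star p).
Local Notation X12star := (Defs.X12star p).
Local Notation steady := (Defs.steady p).
Local Notation is_type := (Defs.is_type p).
Local Notation cond := (Defs.cond p).

Hypotheses (k1_gt0 : 0 < k1) (k2_gt0 : 0 < k2) (k3_gt0 : 0 < k3) (D_gt0 : 0 < D p)
  (r_in01 : 0 < r p < 1) (S1in_ge0 : 0 <= S1in) (S2in_ge0 : 0 <= S2in)
  (mu1_H1 : H1 p dmu1) (mu2_H2 : H2 p dmu2).

Let k1_neq0 : k1 != 0. Proof. exact: lt0r_neq0. Qed.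
Let k2_neq0 : k2 != 0. Proof. exact: lt0r_neq0. Qed.
Let k3_neq0 : k3 != 0. Proof. exact: lt0r_neq0. Qed.
Let feed2_ge0 x : 0 <= x -> 0 <= S2in + k2 * x.
Proof. by move=> x0; rewrite addr_ge0 // mulr_ge0 // ltW. Qed.

Lemma rr_gt0 i : 0 < rr p i.
Proof. by case: i => /=; case/andP: r_in01 => r0 r1; rewrite ?subr_gt0. Qed.

Lemma Dd_gt0 i : 0 < Dd i.
Proof. by rewrite divr_gt0 ?rr_gt0. Qed.

Let mu1_C1 : C1_Rplus_with_deriv mu1 dmu1. Proof. by case: mu1_H1. Qed.
Let mu1_0 : mu1 0 = 0. Proof. by case: mu1_H1 => _ []. Qed.
Let mu1_lim : mu1 x @[x --> +oo] --> m1 p. Proof. by case: mu1_H1 => _ [_ []]. Qed.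
Let dmu1_gt0 : forall s, 0 < s -> 0 < dmu1 s. Proof. by case: mu1_H1 => _ [_ []]. Qed.
Let mu2_C1 : C1_Rplus_with_deriv mu2 dmu2. Proof. by case: mu2_H2. Qed.
Let mu2_0 : mu2 0 = 0. Proof. by case: mu2_H2 => _ []. Qed.
Let mu2_lim : mu2 x @[x --> +oo] --> 0. Proof. by case: mu2_H2 => _ [_ []]. Qed.
Let S2m_gt0 : 0 < S2m. Proof. by case: mu2_H2 => _ [_ [_ []]]. Qed.
Let dmu2_gt0 : forall s, 0 < s < S2m -> 0 < dmu2 s.
Proof. by case: mu2_H2 => _ [_ [_ [_ []]]]. Qed.
Let dmu2_lt0 : forall s, S2m < s -> dmu2 s < 0.
Proof. by case: mu2_H2 => _ [_ [_ [_ []]]]. Qed.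

Lemma mu1_ltr {s t} : 0 <= s -> s < t -> mu1 s < mu1 t.
Proof.
move=> s0 st; apply: (C1_Rplus_ltr mu1_C1 s0 st) => x /andP [sx _].
exact/dmu1_gt0/(le_lt_trans s0 sx).
Qed.

Lemma mu1_lt_m1 {s} : 0 <= s -> mu1 s < m1 p.
Proof.
move=> s0; have s1 : mu1 s < mu1 (s + 1) by apply: mu1_ltr; rewrite ?ltrDl.
apply: (lt_le_trans s1); rewrite leNgt; apply/negP => m1_lt.
have := mu1_lim; move/cvgrPdist_lt/(_ (mu1 (s + 1) - m1 p)).
rewrite subr_gt0 => /(_ m1_lt) near_m1.
have [M sM dM] := pinfty_ex_gt (m := s + 1) (num_real _) near_m1.
have := mu1_ltr (addr_ge0 s0 ler01) sM.
by move: dM; rewrite ltr_norml => /andP [h1 h2] h3; lra.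
Qed.

Lemma mu1_exceeds {v} : v < m1 p -> exists2 T, 0 <= T & v < mu1 T.
Proof.
move=> vm; have := mu1_lim; move/cvgrPdist_lt/(_ (m1 p - v)).
rewrite subr_gt0 => /(_ vm) near_m1.
have [M M0 dM] := pinfty_ex_gt (m := 0) (num_real _) near_m1.
by exists M; [exact: ltW | move: dM; rewrite ltr_norml => /andP [h1 h2]; lra].
Qed.

Lemma mu2_ltr {s t} : 0 <= s -> s < t -> t <= S2m -> mu2 s < mu2 t.
Proof.
move=> s0 st tS; apply: (C1_Rplus_ltr mu2_C1 s0 st) => x /andP [sx xt].
by apply: dmu2_gt0; rewrite (le_lt_trans s0 sx) (lt_le_trans xt tS).
Qed.

Lemma mu2_gtr {s t} : S2m <= s -> s < t -> mu2 t < mu2 s.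
Proof.
move=> Ss st; apply: (C1_Rplus_gtr mu2_C1 (ltW (lt_le_trans S2m_gt0 Ss)) st).
by move=> x /andP [sx _]; apply: dmu2_lt0; exact: le_lt_trans sx.
Qed.

Lemma mu2_le_max {s} : 0 <= s -> mu2 s <= mu2 S2m.
Proof.
move=> s0; case: (ltgtP s S2m) => [sS|Ss|-> //].
  exact/ltW/mu2_ltr.
exact/ltW/mu2_gtr.
Qed.

Lemma mu2_ge0 {s} : S2m <= s -> 0 <= mu2 s.
Proof.
move=> Ss; rewrite leNgt; apply/negP => mu_lt0.
have := mu2_lim; move/cvgrPdist_lt/(_ (- mu2 s)).
rewrite oppr_gt0 => /(_ mu_lt0) near_0.
have [M sM dM] := pinfty_ex_gt (m := s) (num_real _) near_0.
have := mu2_gtr Ss sM.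
by move: dM; rewrite sub0r normrN ltr_norml => /andP [h1 h2] h3; lra.
Qed.

Lemma mu2_gt0 {s} : 0 < s -> 0 < mu2 s.
Proof.
move=> s0; case: (lerP s S2m) => [sS|Ss]; first by rewrite -mu2_0 mu2_ltr.
apply: (le_lt_trans (mu2_ge0 (_ : S2m <= s + 1))); last by rewrite mu2_gtr ?ltW ?ltrDl.
by rewrite ltW // (lt_le_trans Ss) // lerDl.
Qed.

Lemma mu2_below {v} : 0 < v -> exists2 T, S2m <= T & mu2 T < v.
Proof.
move=> v0; have := mu2_lim; move/cvgrPdist_lt/(_ v v0) => near_0.
have [M SM dM] := pinfty_ex_gt (m := S2m) (num_real _) near_0.
by exists M; [exact: ltW | move: dM; rewrite sub0r normrN ltr_norml => /andP [h1 h2]; lra].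
Qed.

Variant lambda1_spec i : \bar R -> Prop :=
| Lambda1Infty of (forall s, 0 <= s -> mu1 s <> Dd i) : lambda1_spec i +oo%E
| Lambda1Fin l of 0 < l & mu1 l = Dd i & (forall s, 0 <= s -> mu1 s = Dd i -> s = l) :
    lambda1_spec i l%:E.

Lemma lambda1P i : lambda1_spec i (lambda1 i).
Proof.
rewrite /Defs.lambda1; case: ifPn => [D_lt|D_ge]; last first.
  constructor => s s0 ms; move: D_ge; apply/negP/negPn.
  by have := mu1_lt_m1 s0; rewrite ms ltr_pdivrMr ?rr_gt0 // mulrC.
have Dd_lt : Dd i < m1 p by rewrite ltr_pdivrMr ?rr_gt0 // mulrC.
have [T T0 DT] := mu1_exceeds Dd_lt.
have mu_range : mu1 0 <= Dd i <= mu1 T.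
  by rewrite mu1_0 (ltW (Dd_gt0 i)) (ltW DT).
have [c /andP [c0 cT] mc] := C1_Rplus_ivt mu1_C1 (lexx 0) T0 (or_introl mu_range).
have uniq s : 0 <= s -> mu1 s = Dd i -> s = c.
  move=> s0 ms; case: (ltgtP s c) => // [sc|cs].
    by have := mu1_ltr s0 sc; rewrite ms mc ltxx.
  by have := mu1_ltr c0 cs; rewrite ms mc ltxx.
have c_gt0 := root_gt0 mu1_0 (Dd_gt0 i) c0 mc.
have -> : xget 0 [set S | 0 <= S /\ mu1 S = Dd i] = c.
  by apply: xget_unique => [|y [y0 /(uniq _ y0)]].
exact: Lambda1Fin.
Qed.

Lemma mu2_roots {v} : 0 < v -> v <= mu2 S2m ->
  exists l1 l2, [/\ 0 < l1 <= S2m, S2m <= l2, mu2 l1 = v, mu2 l2 = v &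
    forall s, 0 <= s -> mu2 s = v -> s = l1 \/ s = l2].
Proof.
move=> v0 vm.
have range1 : mu2 0 <= v <= mu2 S2m by rewrite mu2_0 (ltW v0) vm.
have [l1 /andP [l1_ge0 l1S] m1] :=
  C1_Rplus_ivt mu2_C1 (lexx 0) (ltW S2m_gt0) (or_introl range1).
have [T ST mT] := mu2_below v0.
have range2 : mu2 T <= v <= mu2 S2m by rewrite (ltW mT) vm.
have [l2 /andP [Sl2 _] m2] :=
  C1_Rplus_ivt mu2_C1 (ltW S2m_gt0) ST (or_intror range2).
have l1_gt0 := root_gt0 mu2_0 v0 l1_ge0 m1.
exists l1, l2; split; rewrite ?l1_gt0 // => s s0 ms.
case: (lerP s S2m) => [sS|Ss].
  left; case: (ltgtP s l1) => // [sl|ls].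
    by have := mu2_ltr s0 sl l1S; rewrite ms m1 ltxx.
  by have := mu2_ltr l1_ge0 ls sS; rewrite ms m1 ltxx.
right; case: (ltgtP s l2) => // [sl|ls].
  by have := mu2_gtr (ltW Ss) sl; rewrite ms m2 ltxx.
by have := mu2_gtr Sl2 ls; rewrite ms m2 ltxx.
Qed.

Variant lambda2_spec i : \bar R -> \bar R -> Prop :=
| Lambda2Infty of (forall s, 0 <= s -> mu2 s <> Dd i) : lambda2_spec i +oo%E +oo%E
| Lambda2Fin l1 l2 of 0 < l1 & l1 <= l2 & mu2 l1 = Dd i & mu2 l2 = Dd i &
    (forall s, 0 <= s -> mu2 s = Dd i -> s = l1 \/ s = l2) : lambda2_spec i l1%:E l2%:E.

Lemma lambda2P i : lambda2_spec i (lambda2 i b1) (lambda2 i b2).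
Proof.
rewrite /Defs.lambda2; case: ifPn => [D_le|D_gt] /=; last first.
  constructor => s s0 ms; move: D_gt; apply/negP/negPn.
  by have := mu2_le_max s0; rewrite ms ler_pdivrMr ?rr_gt0 // mulrC.
have Dd_le : Dd i <= mu2 S2m by rewrite ler_pdivrMr ?rr_gt0 // mulrC; exact: D_le.
have [l1 [l2 [/andP [l1_gt0 l1S] Sl2 m1 m2 roots]]] := mu2_roots (Dd_gt0 i) Dd_le.
have l12 : l1 <= l2 := le_trans l1S Sl2.
have between s : 0 <= s -> mu2 s = Dd i -> l1 <= s <= l2.
  by move=> s0 /(roots _ s0) [->|->]; rewrite ?lexx l12.
have l2_ge0 : 0 <= l2 := le_trans (ltW l1_gt0) l12.
have -> : xget 0 [set S | 0 <= S /\ mu2 S = Dd i /\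
                   forall T, 0 <= T -> mu2 T = Dd i -> S <= T] = l1.
  apply: xget_unique => [|y [y0 [my y_min]]].
    split; first exact: ltW l1_gt0.
    by split => // T T0 /(between _ T0) /andP [].
  by apply/eqP; rewrite eq_le y_min ?(ltW l1_gt0) //; case/andP: (between _ y0 my).
have -> : xget 0 [set S | 0 <= S /\ mu2 S = Dd i /\
                   forall T, 0 <= T -> mu2 T = Dd i -> T <= S] = l2.
  apply: xget_unique => [|y [y0 [my y_max]]].
    by split => //; split => // T T0 /(between _ T0) /andP [].
  by apply/eqP; rewrite eq_le y_max // andbT; case/andP: (between _ y0 my).
exact: Lambda2Fin.
Qed.

Lemma lambda1_root i s : 0 <= s -> mu1 s = Dd i -> lambda1 i = s%:E.
Proof.
move=> s0 ms; case: lambda1P => [no_root|l _ _ uniq]; first by case: (no_root s s0 ms).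
by rewrite (uniq s s0 ms).
Qed.

Lemma lambda1_fin {i} : (lambda1 i < +oo)%E ->
  exists2 l, lambda1 i = l%:E & 0 < l /\ mu1 l = Dd i.
Proof. by case: lambda1P => [|l l_gt0 ml _ _]; [rewrite ltxx | exists l]. Qed.

Lemma lambda2_root i s : 0 <= s -> mu2 s = Dd i -> exists j, lambda2 i j = s%:E.
Proof.
move=> s0 ms.
suff : lambda2 i b1 = s%:E \/ lambda2 i b2 = s%:E by case; [exists b1 | exists b2].
case: (lambda2P i) => [no_root|l1 l2 _ _ _ _ roots]; first by case: (no_root s s0 ms).
by case: (roots s s0 ms) => ->; [left | right].
Qed.

Lemma lambda2_fin {i j} : (lambda2 i j < +oo)%E ->
  exists2 l, lambda2 i j = l%:E & 0 < l /\ mu2 l = Dd i.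
Proof.
case: j; case: (lambda2P i) => [|l1 l2 l1_gt0 l12 m1 m2 _]; rewrite ?ltxx //.
  by exists l1.
by exists l2; split => //; exact: lt_le_trans l12.
Qed.

Lemma lambda2_fin_of_F {i j a x} : lambda1 i = a%:E -> (F i j < x%:E)%E ->
  (lambda2 i j < +oo)%E.
Proof.
move=> Ea; case E: (lambda2 i j) => [l| |] //; first by rewrite ltry.
by rewrite /Defs.F Ea E /= mulry gtr0_sg ?mul1e // divr_gt0.
Qed.

Lemma F_fin {i j a b} : lambda1 i = a%:E -> lambda2 i j = b%:E ->
  F i j = (a + k1 / k2 * (b - S2in))%:E.
Proof. by move=> Ea Eb; rewrite /Defs.F Ea Eb -EFinB -EFinM -EFinD. Qed.

Lemma F_quot {i j x y} : lambda1 i = (S1in - k1 * x)%:E ->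
  lambda2 i j = (S2in + k2 * x - k3 * y)%:E ->
  y%:E = ((k2 / (k1 * k3))%:E * (S1in%:E - F i j))%E.
Proof.
move=> E1 E2; rewrite (F_fin E1 E2) -EFinB -EFinM; congr EFin.
by field; rewrite k1_neq0 k2_neq0 k3_neq0.
Qed.

Lemma X11star_spec : (lambda1 b1 < S1in%:E)%E ->
  [/\ 0 < X11star, 0 < S1in - k1 * X11star, lambda1 b1 = (S1in - k1 * X11star)%:E
    & mu1 (S1in - k1 * X11star) = Dd b1].
Proof.
rewrite /Defs.X11star; case: lambda1P => [_|l l_gt0 ml _]; first by rewrite ltNge leey.
rewrite lte_fin /= => lS; rewrite affine_quotK //.
by split => //; rewrite divr_gt0 // subr_gt0.
Qed.

Lemma X11star_root {x} : lambda1 b1 = (S1in - k1 * x)%:E -> X11star = x.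
Proof. by move=> E1; rewrite /Defs.X11star E1 /=; field. Qed.

Lemma X12star_spec : (lambda1 b1 < S1in%:E)%E ->
  [/\ X11star < X12star, 0 <= S1in - k1 * X12star,
      mu1 (S1in - k1 * X12star) = Dd b2 * (X12star - X11star) / X12star &
      forall x, 0 < x -> 0 <= S1in - k1 * x ->
        mu1 (S1in - k1 * x) = Dd b2 * (x - X11star) / x -> x = X12star].
Proof.
move=> lt_l; have [X_gt0 sX _ mX] := X11star_spec lt_l.
have mX_gt0 : 0 < mu1 (S1in - k1 * X11star) by rewrite mX Dd_gt0.
have [c [Xc sc mc]] := f_eq_g_exists mu1_C1 mu1_0 k1_gt0 (Dd_gt0 b2) X_gt0 sX mX_gt0.
have c_gt0 := lt_trans X_gt0 Xc.
have uniq x : 0 < x -> 0 <= S1in - k1 * x ->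
    mu1 (S1in - k1 * x) = Dd b2 * (x - X11star) / x -> x = c.
  move=> x0 sx mx.
  exact: f_eq_g_unique (@mu1_ltr) k1_gt0 (Dd_gt0 b2) X_gt0 x0 c_gt0 sx sc mx mc.
have -> : X12star = c.
  apply: xget_unique => [|y [/andP [y0 ys] my]].
    by split => //; rewrite c_gt0 le_divr_subr_ge0.
  by apply: uniq; rewrite -?le_divr_subr_ge0.
by split.
Qed.

Lemma steadyP x1 x2 x3 x4 : steady x1 x2 x3 x4 <->
  [/\ [/\ 0 <= x1, 0 <= x2, 0 <= x3 & 0 <= x4],
      [/\ 0 <= S1in - k1 * x1, 0 <= S2in + k2 * x1 - k3 * x2,
          0 <= S1in - k1 * x3 & 0 <= S2in + k2 * x3 - k3 * x4] &
      [/\ (mu1 (S1in - k1 * x1) - Dd b1) * x1 = 0,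
          (mu2 (S2in + k2 * x1 - k3 * x2) - Dd b1) * x2 = 0,
          Dd b2 * (x1 - x3) + mu1 (S1in - k1 * x3) * x3 = 0 &
          Dd b2 * (x2 - x4) + mu2 (S2in + k2 * x3 - k3 * x4) * x4 = 0]].
Proof.
rewrite /Defs.steady /inM !le_divr_subr_ge0 //.
split=> [[[/andP [? ?] [/andP [? ?] [/andP [? ?] /andP [? ?]]]] [? [? [? ?]]]]|] //.
by move=> [[-> -> -> ->] [-> -> -> ->] [? ? ? ?]].
Qed.

Lemma mu1_balance_cases {i x} : 0 <= x -> 0 <= S1in - k1 * x ->
  (mu1 (S1in - k1 * x) - Dd i) * x = 0 ->
  x = 0 \/ 0 < x /\ lambda1 i = (S1in - k1 * x)%:E.
Proof.
move=> x0 sx /(ge0_mul_eq0 x0) [->|[x_gt0 /subr0_eq mx]]; first by left.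
by right; split => //; apply: lambda1_root.
Qed.

Lemma mu2_balance_cases {i A x} : 0 <= x -> 0 <= A - k3 * x ->
  (mu2 (A - k3 * x) - Dd i) * x = 0 ->
  x = 0 \/ 0 < x /\ exists j, lambda2 i j = (A - k3 * x)%:E.
Proof.
move=> x0 sx /(ge0_mul_eq0 x0) [->|[x_gt0 /subr0_eq mx]]; first by left.
by right; split => //; apply: lambda2_root.
Qed.

Lemma classify_X11_eq0 x2 x3 x4 : steady 0 x2 x3 x4 -> exists t, is_type t 0 x2 x3 x4.
Proof.
move=> /steadyP [[_ x2_ge0 x3_ge0 x4_ge0] [_ s2 s3 s4] [_ e2 /inflow0_eq e3 e4]].
rewrite mulr0 addr0 in s2 e2.
have [x3_0|[x3_gt0 E3]] := mu1_balance_cases x3_ge0 s3 e3.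
  subst x3; rewrite mulr0 addr0 in s4 e4.
  have [x2_0|[x2_gt0 [j E2]]] := mu2_balance_cases x2_ge0 s2 e2.
    subst x2; move/inflow0_eq: e4 => e4.
    have [->|[x4_gt0 [j E4]]] := mu2_balance_cases x4_ge0 s4 e4; first by exists E00_00.
    by exists (E00_0 j); do 4!split => //; rewrite E4; apply: EFin_solve_affine.
  have x4_gt0 := inflow_gt0 (Dd_gt0 b2) x2_gt0 x4_ge0 e4.
  exists (E0_01 j); do 4!split => //; split; first by rewrite E2; apply: EFin_solve_affine.
  by rewrite le_divr_subr_ge0 //; split => //; apply/(inflow_pos_eq x4_gt0).
have [x2_0|[x2_gt0 [j E2]]] := mu2_balance_cases x2_ge0 s2 e2.
  subst x2; move/inflow0_eq: e4 => e4.
  have [->|[x4_gt0 [j E4]]] := mu2_balance_cases x4_ge0 s4 e4.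
    by exists E00_10; do 4!split => //; rewrite E3; apply: EFin_solve_affine.
  exists (E00_1 j); do 4!split => //; split; first by rewrite E3; apply: EFin_solve_affine.
  exact: F_quot E3 E4.
have x4_gt0 := inflow_gt0 (Dd_gt0 b2) x2_gt0 x4_ge0 e4.
exists (E0_11 j); do 4!split => //; split; first by rewrite E2; apply: EFin_solve_affine.
split; first by rewrite E3; apply: EFin_solve_affine.
by rewrite le_divr_subr_ge0 //; split => //; apply/(inflow_pos_eq x4_gt0).
Qed.

Lemma classify_X11_gt0 x1 x2 x3 x4 : 0 < x1 -> steady x1 x2 x3 x4 ->
  exists t, is_type t x1 x2 x3 x4.
Proof.
move=> x1_gt0 /steadyP [[x1_ge0 x2_ge0 x3_ge0 x4_ge0] [s1 s2 s3 s4] [e1 e2 e3 e4]].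
have [/eqP|[_ E1]] := mu1_balance_cases x1_ge0 s1 e1; first by rewrite gt_eqF.
have lt_l : (lambda1 b1 < S1in%:E)%E.
  by rewrite E1 lte_fin; have := mulr_gt0 k1_gt0 x1_gt0; lra.
have [_ _ _ X12_uniq] := X12star_spec lt_l.
have x3_gt0 := inflow_gt0 (Dd_gt0 b2) x1_gt0 x3_ge0 e3.
have x3E : x3 = X12star.
  by apply: X12_uniq => //; rewrite (X11star_root E1); apply/(inflow_pos_eq x3_gt0).
have X1E : x1%:E = ((S1in%:E - lambda1 b1) * k1^-1%:E)%E.
  by rewrite E1; apply: EFin_solve_affine.
have [x2_0|[x2_gt0 [j E2]]] := mu2_balance_cases x2_ge0 s2 e2.
  subst x2; move/inflow0_eq: e4 => e4.
  have [->|[x4_gt0 [j E4]]] := mu2_balance_cases x4_ge0 s4 e4; first by exists E10_10.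
  exists (E10_1 j); do 6!split => //.
  by rewrite /Defs.phi -x3E E4; apply: EFin_solve_affine.
have x4_gt0 := inflow_gt0 (Dd_gt0 b2) x2_gt0 x4_ge0 e4.
exists (E1_11 j); do 6!split => //; first exact: F_quot E1 E2.
by split => //; rewrite le_divr_subr_ge0 //; split => //; apply/(inflow_pos_eq x4_gt0).
Qed.

Lemma steady_classify x1 x2 x3 x4 : steady x1 x2 x3 x4 -> exists t, is_type t x1 x2 x3 x4.
Proof.
move=> st; have /steadyP [[+ _ _ _] _ _] := st.
rewrite le_eqVlt => /predU1P [x1_0|x1_gt0]; last exact: classify_X11_gt0.
by subst x1; exact: classify_X11_eq0.
Qed.

Lemma is_type_cond t x1 x2 x3 x4 : is_type t x1 x2 x3 x4 -> cond t.
Proof.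
have quot_gt0 (x a k : R) (e : \bar R) : 0 < k ->
    x%:E = ((a%:E - e) * k^-1%:E)%E -> (0 < x) = (e < a%:E)%E.
  by move=> k0 E; rewrite -sube_gt0 (EFin_pmulr_gt0 _ E) // invr_gt0.
have scale_gt0 (x a : R) (e : \bar R) :
    x%:E = ((k2 / (k1 * k3))%:E * (a%:E - e))%E -> (0 < x) = (e < a%:E)%E.
  by rewrite muleC => E; rewrite -sube_gt0 (EFin_pmulr_gt0 _ E) // divr_gt0 ?mulr_gt0.
case: t => [|i||i||i|i|i|i] //=.
- by case=> _ [_ [_ [x4_gt0 E4]]]; rewrite -(quot_gt0 _ _ _ _ k3_gt0 E4).
- by case=> _ [_ [x3_gt0 [_ E3]]]; rewrite -(quot_gt0 _ _ _ _ k1_gt0 E3).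
- case=> _ [_ [x3_gt0 [x4_gt0 [E3 E4]]]].
  by rewrite gt_max -(quot_gt0 _ _ _ _ k1_gt0 E3) -(scale_gt0 _ _ _ E4) x3_gt0.
- by case=> x1_gt0 [_ [_ [_ [E1 _]]]]; rewrite -(quot_gt0 _ _ _ _ k1_gt0 E1).
- case=> x1_gt0 [_ [_ [x4_gt0 [E1 [_ E4]]]]].
  by rewrite -(quot_gt0 _ _ _ _ k1_gt0 E1) -(EFin_pmulr_gt0 _ E4) ?invr_gt0.
- by case=> _ [x2_gt0 [_ [_ [E2 _]]]]; rewrite -(quot_gt0 _ _ _ _ k3_gt0 E2).
- case=> _ [x2_gt0 [x3_gt0 [_ [E2 [E3 _]]]]].
  by rewrite -(quot_gt0 _ _ _ _ k1_gt0 E3) -(quot_gt0 _ _ _ _ k3_gt0 E2).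
- case=> x1_gt0 [x2_gt0 [_ [_ [E1 [E2 _]]]]].
  by rewrite gt_max -(quot_gt0 _ _ _ _ k1_gt0 E1) -(scale_gt0 _ _ _ E2) x1_gt0.
Qed.

Lemma mu2_f_eq_g_exists {A x2 : R} : 0 < x2 -> 0 < A - k3 * x2 ->
  exists x4, [/\ x2 < x4, 0 <= A - k3 * x4 & mu2 (A - k3 * x4) = Dd b2 * (x4 - x2) / x4].
Proof.
move=> x2_gt0 sA.
have [x4 root] := f_eq_g_exists mu2_C1 mu2_0 k3_gt0 (Dd_gt0 b2) x2_gt0 sA (mu2_gt0 sA).
by exists x4.
Qed.

Lemma exists_E00_00 :
  exists x1 x2 x3 x4, steady x1 x2 x3 x4 /\ is_type E00_00 x1 x2 x3 x4.
Proof.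
exists 0, 0, 0, 0; split => //; apply/steadyP.
by rewrite !(mulr0, addr0, subr0) lexx.
Qed.

Lemma exists_E00_0 i : cond (E00_0 i) ->
  exists x1 x2 x3 x4, steady x1 x2 x3 x4 /\ is_type (E00_0 i) x1 x2 x3 x4.
Proof.
move=> /= lt_l; have [l El [l_gt0 ml]] := lambda2_fin (lt_trans lt_l (ltry _)).
rewrite El lte_fin -subr_gt0 in lt_l.
pose x4 := (S2in - l) / k3; have s4 : S2in - k3 * x4 = l by rewrite affine_quotK.
have x4_gt0 : 0 < x4 by rewrite divr_gt0.
exists 0, 0, 0, x4; split; last by do 4!split => //; rewrite El -EFinB -EFinM.
apply/steadyP; rewrite !(mulr0, addr0, subr0, sub0r) s4 ml mulrN addNr.
by rewrite lexx (ltW x4_gt0) (ltW l_gt0).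
Qed.

Lemma exists_E00_10 : cond E00_10 ->
  exists x1 x2 x3 x4, steady x1 x2 x3 x4 /\ is_type E00_10 x1 x2 x3 x4.
Proof.
move=> /= lt_l; have [l El [l_gt0 ml]] := lambda1_fin (lt_trans lt_l (ltry _)).
rewrite El lte_fin -subr_gt0 in lt_l.
pose x3 := (S1in - l) / k1; have s3 : S1in - k1 * x3 = l by rewrite affine_quotK.
have x3_gt0 : 0 < x3 by rewrite divr_gt0.
exists 0, 0, x3, 0; split; last by do 4!split => //; rewrite El -EFinB -EFinM.
apply/steadyP; rewrite !(mulr0, addr0, subr0, sub0r) s3 ml mulrN addNr.
by rewrite lexx (ltW x3_gt0) (ltW l_gt0) feed2_ge0 // ltW.
Qed.

Lemma exists_E00_1 i : cond (E00_1 i) ->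
  exists x1 x2 x3 x4, steady x1 x2 x3 x4 /\ is_type (E00_1 i) x1 x2 x3 x4.
Proof.
rewrite /= gt_max => /andP [lt_l1 lt_F].
have [l1 E1 [l1_gt0 ml1]] := lambda1_fin (lt_trans lt_l1 (ltry _)).
have [l2 E2 [l2_gt0 ml2]] := lambda2_fin (lambda2_fin_of_F E1 lt_F).
rewrite E1 lte_fin -subr_gt0 in lt_l1.
pose x3 := (S1in - l1) / k1; have s3 : S1in - k1 * x3 = l1 by rewrite affine_quotK.
pose x4 := (S2in + k2 * x3 - l2) / k3.
have s4 : S2in + k2 * x3 - k3 * x4 = l2 by rewrite affine_quotK.
have x3_gt0 : 0 < x3 by rewrite divr_gt0.
have X4E : x4%:E = ((k2 / (k1 * k3))%:E * (S1in%:E - F b2 i))%E.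
  by apply: (F_quot (x := x3)); rewrite ?s3 ?s4.
have x4_gt0 : 0 < x4.
  by rewrite muleC in X4E; rewrite (EFin_pmulr_gt0 _ X4E) ?sube_gt0 // divr_gt0 ?mulr_gt0.
exists 0, 0, x3, x4; split; last by do 4!split => //; rewrite E1 -EFinB -EFinM.
apply/steadyP; rewrite !(mulr0, addr0, subr0, sub0r) s3 s4 ml1 ml2 !mulrN !addNr.
by rewrite lexx (ltW x3_gt0) (ltW x4_gt0) (ltW l1_gt0) (ltW l2_gt0).
Qed.

Lemma exists_E10_10 : cond E10_10 ->
  exists x1 x2 x3 x4, steady x1 x2 x3 x4 /\ is_type E10_10 x1 x2 x3 x4.
Proof.
move=> /= lt_l; have [X1_gt0 s1 E1 m1] := X11star_spec lt_l.
have [X12_gt s3 m3 _] := X12star_spec lt_l.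
have X2_gt0 := lt_trans X1_gt0 X12_gt.
exists X11star, 0, X12star, 0; split.
  apply/steadyP; rewrite !(mulr0, addr0, subr0) m1 subrr mul0r.
  rewrite lexx (ltW X1_gt0) (ltW X2_gt0) (ltW s1) s3 !feed2_ge0 ?ltW //.
  by split => //; split => //; apply/(inflow_pos_eq X2_gt0).
by do 5!split => //; rewrite E1; apply: EFin_solve_affine.
Qed.

Lemma exists_E10_1 i : cond (E10_1 i) ->
  exists x1 x2 x3 x4, steady x1 x2 x3 x4 /\ is_type (E10_1 i) x1 x2 x3 x4.
Proof.
move=> /= [lt_l phi_gt0]; have [X1_gt0 s1 E1 m1] := X11star_spec lt_l.
have [X12_gt s3 m3 _] := X12star_spec lt_l.
have X2_gt0 := lt_trans X1_gt0 X12_gt.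
have := phi_gt0; rewrite sube_gt0 => lt_l2.
have [l El [l_gt0 ml]] := lambda2_fin (lt_trans lt_l2 (ltry _)).
rewrite El lte_fin -subr_gt0 in lt_l2.
pose x4 := (S2in + k2 * X12star - l) / k3.
have s4 : S2in + k2 * X12star - k3 * x4 = l by rewrite affine_quotK.
have x4_gt0 : 0 < x4 by rewrite divr_gt0.
exists X11star, 0, X12star, x4; split.
  apply/steadyP; rewrite !(mulr0, addr0, subr0, sub0r) m1 s4 ml subrr mul0r mulrN addNr.
  rewrite lexx (ltW X1_gt0) (ltW X2_gt0) (ltW x4_gt0) (ltW s1) (ltW l_gt0) s3.
  by rewrite feed2_ge0 ?ltW //; split => //; split => //; apply/(inflow_pos_eq X2_gt0).
do 4!split => //; split; first by rewrite E1; apply: EFin_solve_affine.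
by split => //; rewrite /Defs.phi El -EFinB -EFinM.
Qed.

Lemma exists_E0_01 i : cond (E0_01 i) ->
  exists x1 x2 x3 x4, steady x1 x2 x3 x4 /\ is_type (E0_01 i) x1 x2 x3 x4.
Proof.
move=> /= lt_l; have [l El [l_gt0 ml]] := lambda2_fin (lt_trans lt_l (ltry _)).
rewrite El lte_fin -subr_gt0 in lt_l.
pose x2 := (S2in - l) / k3; have s2 : S2in - k3 * x2 = l by rewrite affine_quotK.
have x2_gt0 : 0 < x2 by rewrite divr_gt0.
have sA : 0 < S2in - k3 * x2 by rewrite s2.
have [x4 [x24 s4 m4]] := mu2_f_eq_g_exists x2_gt0 sA.
have x4_gt0 := lt_trans x2_gt0 x24.
exists 0, x2, 0, x4; split.
  apply/steadyP; rewrite !(mulr0, addr0, subr0, sub0r) s2 ml subrr mul0r.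
  rewrite lexx (ltW x2_gt0) (ltW x4_gt0) (ltW l_gt0) s4.
  by split => //; split => //; apply/(inflow_pos_eq x4_gt0).
do 4!split => //; split; first by rewrite El -EFinB -EFinM.
by rewrite le_divr_subr_ge0.
Qed.

Lemma exists_E0_11 i : cond (E0_11 i) ->
  exists x1 x2 x3 x4, steady x1 x2 x3 x4 /\ is_type (E0_11 i) x1 x2 x3 x4.
Proof.
move=> /= [lt_l1 lt_l2].
have [l1 E1 [l1_gt0 ml1]] := lambda1_fin (lt_trans lt_l1 (ltry _)).
have [l2 E2 [l2_gt0 ml2]] := lambda2_fin (lt_trans lt_l2 (ltry _)).
rewrite E1 lte_fin -subr_gt0 in lt_l1; rewrite E2 lte_fin -subr_gt0 in lt_l2.
pose x3 := (S1in - l1) / k1; have s3 : S1in - k1 * x3 = l1 by rewrite affine_quotK.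
pose x2 := (S2in - l2) / k3; have s2 : S2in - k3 * x2 = l2 by rewrite affine_quotK.
have x3_gt0 : 0 < x3 by rewrite divr_gt0.
have x2_gt0 : 0 < x2 by rewrite divr_gt0.
have sA : 0 < S2in + k2 * x3 - k3 * x2 by rewrite addrAC s2 addr_gt0 // mulr_gt0.
have [x4 [x24 s4 m4]] := mu2_f_eq_g_exists x2_gt0 sA.
have x4_gt0 := lt_trans x2_gt0 x24.
exists 0, x2, x3, x4; split.
  apply/steadyP; rewrite !(mulr0, addr0, subr0, sub0r) s2 s3 ml1 ml2 subrr mul0r mulrN addNr.
  rewrite lexx (ltW x2_gt0) (ltW x3_gt0) (ltW x4_gt0) (ltW l1_gt0) (ltW l2_gt0) s4.
  by split => //; split => //; apply/(inflow_pos_eq x4_gt0).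
do 4!split => //; split; first by rewrite E2 -EFinB -EFinM.
split; first by rewrite E1 -EFinB -EFinM.
by rewrite le_divr_subr_ge0.
Qed.

Lemma exists_E1_11 i : cond (E1_11 i) ->
  exists x1 x2 x3 x4, steady x1 x2 x3 x4 /\ is_type (E1_11 i) x1 x2 x3 x4.
Proof.
rewrite /= gt_max => /andP [lt_l lt_F].
have [X1_gt0 s1 E1 m1] := X11star_spec lt_l.
have [X12_gt s3 m3 _] := X12star_spec lt_l.
have X2_gt0 := lt_trans X1_gt0 X12_gt.
have [l2 E2 [l2_gt0 ml2]] := lambda2_fin (lambda2_fin_of_F E1 lt_F).
pose x2 := (S2in + k2 * X11star - l2) / k3.
have s2 : S2in + k2 * X11star - k3 * x2 = l2 by rewrite affine_quotK.
have X2E : x2%:E = ((k2 / (k1 * k3))%:E * (S1in%:E - F b1 i))%E.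
  by apply: (F_quot (x := X11star)); rewrite ?s2.
have x2_gt0 : 0 < x2.
  by rewrite muleC in X2E; rewrite (EFin_pmulr_gt0 _ X2E) ?sube_gt0 // divr_gt0 ?mulr_gt0.
have sA : 0 < S2in + k2 * X12star - k3 * x2.
  have : k2 * X11star < k2 * X12star by rewrite ltr_pM2l.
  by move: s2 l2_gt0; lra.
have [x4 [x24 s4 m4]] := mu2_f_eq_g_exists x2_gt0 sA.
have x4_gt0 := lt_trans x2_gt0 x24.
exists X11star, x2, X12star, x4; split.
  apply/steadyP; rewrite m1 s2 ml2 !subrr !mul0r.
  rewrite (ltW X1_gt0) (ltW x2_gt0) (ltW X2_gt0) (ltW x4_gt0) (ltW s1) (ltW l2_gt0) s3 s4.
  split => //; split => //.
    exact/(inflow_pos_eq X2_gt0).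
  exact/(inflow_pos_eq x4_gt0).
do 4!split => //; split; first by rewrite E1; apply: EFin_solve_affine.
by split => //; split => //; rewrite le_divr_subr_ge0.
Qed.

Lemma cond_exists t : cond t ->
  exists x1 x2 x3 x4, steady x1 x2 x3 x4 /\ is_type t x1 x2 x3 x4.
Proof.
case: t => [|i||i||i|i|i|i].
- by move=> _; exact: exists_E00_00.
- exact: exists_E00_0.
- exact: exists_E00_10.
- exact: exists_E00_1.
- exact: exists_E10_10.
- exact: exists_E10_1.
- exact: exists_E0_01.
- exact: exists_E0_11.
- exact: exists_E1_11.
Qed.

End Model.

Theorem proposition3p1 (R : realType) (p : model R) (dmu1 dmu2 : R -> R) :
  0 < k1 p -> 0 < k2 p -> 0 < k3 p -> 0 < D p -> 0 < r p < 1 ->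
  0 <= S1in p -> 0 <= S2in p ->
  H1 p dmu1 -> H2 p dmu2 ->
  (* every nonnegative steady state is of one of the nine types *)
  (forall x1 x2 x3 x4 : R, steady p x1 x2 x3 x4 ->
     exists t : sstype, is_type p t x1 x2 x3 x4)
  /\
  (* a steady state of type t exists iff the condition for t holds *)
  (forall t : sstype,
     (exists x1 x2 x3 x4 : R, steady p x1 x2 x3 x4 /\ is_type p t x1 x2 x3 x4)
     <-> cond p t).
Proof.
move=> k1_gt0 k2_gt0 k3_gt0 D_gt0 r_in01 S1in_ge0 S2in_ge0 mu1_H1 mu2_H2.
split; first by move=> x1 x2 x3 x4; apply: (steady_classify _ _ dmu1 dmu2).
move=> t; split; last by apply: (cond_exists _ _ dmu1 dmu2).
by case=> [x1 [x2 [x3 [x4 [_]]]]]; apply: is_type_cond.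
Qed.
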